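(* Let $h=h(u,v)$ be smooth with $h_{uu}h_{vv}<0$, and consider the elliptic system $u_t=h_{uv}u_x+h_{vv}v_x$, $v_t=h_{uu}u_x+h_{uv}v_x$ with analytic initial data, written in complex conjugate Riemann invariants as $\partial_tr_\pm=\lambda_\pm(r)\partial_xr_\pm$. Let $r_\pm(x,t)$ be a generic solution, given by the hodograph equations $x+\lambda_\pm(r)t=\mu_\pm(r)$, with a point of elliptic break-up at $(x_0,t_0)$, i.e. $$\mu^0_{+,+}=\lambda^0_{+,+}t_0,\qquad \mu^0_{-,-}=\lambda^0_{-,-}t_0 .$$ Put $x_\pm=(x-x_0)+\lambda^0_\pm(t-t_0)$ and $\bar r_\pm=r_\pm-r^0_\pm$ regarded as functions of $(x_+,x_-)$. Then the limits $$R_\pm(X_\pm)=\lim_{k\to0}k^{-1/2}\bar r_\pm(kX_+,kX_-)$$ exist and satisfy $$X_\pm=\tfrac12a_\pm R_\pm^2,\qquad a_\pm=\mu^0_{\pm,\pm\pm}-t_0\lambda^0_{\pm,\pm\pm}.$$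
   Context: Riemann invariants: $dr_\pm=\kappa_\pm(\sqrt{|h_{vv}|}\,dv\pm i\sqrt{|h_{uu}|}\,du)$ with $\kappa_-=\overline{\kappa_+}$, so $r_-=\overline{r_+}$; characteristic speeds $\lambda_\pm=h_{uv}\pm i\,\mathrm{sign}(h_{vv})\sqrt{|h_{uu}h_{vv}|}$, $\lambda_-=\overline{\lambda_+}$. The functions $\mu_\pm(r)$ satisfy $\frac{\partial\mu_+}{\partial r_-}=\frac{\mu_+-\mu_-}{\lambda_+-\lambda_-}\frac{\partial\lambda_+}{\partial r_-}$, $\frac{\partial\mu_-}{\partial r_+}=\frac{\mu_+-\mu_-}{\lambda_+-\lambda_-}\frac{\partial\lambda_-}{\partial r_+}$. Notation: $g_{\pm,\dots}$ denotes partial derivatives with respect to the Riemann invariants after the comma (e.g. $\mu_{+,++}=\partial^2\mu_+/\partial r_+^2$); a superscript $0$ denotes evaluation at $r^0=r(x_0,t_0)$. ''Generic'' includes the nondegeneracy assumption $a_\pm\neq0$. *)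

From Stdlib Require Import Reals.
From Coquelicot Require Import Coquelicot.
Open Scope R_scope.

(* Riemann invariants: r_+ = z : C, r_- = conj z.  Functions of the Riemann
   invariants are functions f : C -> C of the point r_+ (r_- = conj r_+). *)

Definition dRe (f : C -> C) (z : C) : C :=
  (Derive (fun s => Re (f (s, Im z))) (Re z),
   Derive (fun s => Im (f (s, Im z))) (Re z)).
Definition dIm (f : C -> C) (z : C) : C :=
  (Derive (fun s => Re (f (Re z, s))) (Im z),
   Derive (fun s => Im (f (Re z, s))) (Im z)).

(* partial derivatives with respect to the Riemann invariants:
   d/dr_+ and d/dr_- (Wirtinger derivatives, since r_- = conj r_+) *)
Definition dp (f : C -> C) (z : C) : C :=
  Cmult (RtoC (/ 2)) (Cminus (dRe f z) (Cmult Ci (dIm f z))).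
Definition dm (f : C -> C) (z : C) : C :=
  Cmult (RtoC (/ 2)) (Cplus (dRe f z) (Cmult Ci (dIm f z))).

Fixpoint Ck_on (n : nat) (U : C -> Prop) (f : C -> C) : Prop :=
  match n with
  | O => forall z, U z -> continuous f z
  | S m =>
      (forall z, U z ->
         ex_derive (fun s => Re (f (s, Im z))) (Re z) /\
         ex_derive (fun s => Im (f (s, Im z))) (Re z) /\
         ex_derive (fun s => Re (f (Re z, s))) (Im z) /\
         ex_derive (fun s => Im (f (Re z, s))) (Im z))
      /\ Ck_on m U (dRe f) /\ Ck_on m U (dIm f)
  end.

Definition smooth_on (U : C -> Prop) (f : C -> C) : Prop :=
  forall n, Ck_on n U f.

Definition Cball (z0 : C) (eps : R) : C -> Prop :=
  fun z => Cmod (Cminus z z0) < eps.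

Definition lam_minus (lam : C -> C) : C -> C := fun z => Cconj (lam z).

Definition a_plus (lam mu_p : C -> C) (t0 : R) (r0 : C) : C :=
  Cminus (dp (dp mu_p) r0) (Cmult (RtoC t0) (dp (dp lam) r0)).
Definition a_minus (lam mu_m : C -> C) (t0 : R) (r0 : C) : C :=
  Cminus (dm (dm mu_m) r0) (Cmult (RtoC t0) (dm (dm (lam_minus lam)) r0)).

Definition continuous_on2 (Omega : R -> R -> Prop) (r : R -> R -> C) : Prop :=
  forall x t, Omega x t -> forall e, 0 < e -> exists d, 0 < d /\
    forall x' t', Omega x' t' -> Rabs (x' - x) < d -> Rabs (t' - t) < d ->
      Cmod (Cminus (r x' t') (r x t)) < e.

(* Put F = mu_+ - t0 lambda_+ and h = r_+ - r_+^0.  Along the ray (x - x0, t - t0) = k (xi, tau)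
   the hodograph equation reads
     k X_+ = F(r^0 + h) - F(r^0) - k tau (lambda_+(r^0 + h) - lambda_+(r^0)).
   At the break-up point both Wirtinger derivatives of F vanish, and differentiating the equation
   for mu_+ (which expresses its r_- derivative through that of lambda_+) shows that the r_-
   derivative of F vanishes to first order as well.  So the Taylor expansion of F starts with
   (a_+/2) h^2, whence k X_+ = (a_+/2) h^2 + o(|h|^2) + O(k |h|).  This forces |h|^2 = O(k) and
   h^2 / k -> 2 X_+ / a_+; as h depends continuously on k, h / sqrt k cannot jump between the two
   square roots and converges.  The r_- branch is the same with conj h in place of h. *)

From Stdlib Require Import Reals Lra FunctionalExtensionality.
From Coquelicot Require Import Coquelicot.
Open Scope R_scope.

Lemma im_le_Cmod (c : C) : Rabs (Im c) <= Cmod c.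
Proof.
  unfold Cmod. rewrite <- sqrt_Rsqr_abs. apply sqrt_le_1_alt.
  unfold Rsqr, Im. pose proof (pow2_ge_0 (fst c)). simpl. nra.
Qed.

Lemma Cmod_le_Re_Im (c : C) : Cmod c <= Rabs (Re c) + Rabs (Im c).
Proof.
  destruct c as [a b]. unfold Cmod, Re, Im; simpl.
  pose proof (Rabs_pos a). pose proof (Rabs_pos b).
  rewrite <- (sqrt_Rsqr (Rabs a + Rabs b)) by lra.
  apply sqrt_le_1_alt.
  assert (a * a = Rabs a * Rabs a) by (rewrite <- Rabs_mult; symmetry; apply Rabs_pos_eq; nra).
  assert (b * b = Rabs b * Rabs b) by (rewrite <- Rabs_mult; symmetry; apply Rabs_pos_eq; nra).
  unfold Rsqr. nra.
Qed.

Lemma Rmax_abs_le_Cmod (h : C) : Rmax (Rabs (Re h)) (Rabs (Im h)) <= Cmod h.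
Proof. apply Rmax_lub; [apply re_le_Cmod|apply im_le_Cmod]. Qed.

Lemma Cball_square z0 eps x y : Rabs (x - Re z0) < eps / 2 -> Rabs (y - Im z0) < eps / 2 ->
  Cball z0 eps (x, y).
Proof.
  intros Hx Hy. unfold Cball. eapply Rle_lt_trans; [apply Cmod_le_Re_Im|].
  destruct z0 as [x0 y0]. simpl in *. unfold Rminus in *. lra.
Qed.

(** * Smooth functions of [r_+] *)

Lemma continuous_continuity_2d_pt (f : C -> C) x y : continuous f (x, y) ->
  continuity_2d_pt (fun u v => Re (f (u, v))) x y /\
  continuity_2d_pt (fun u v => Im (f (u, v))) x y.
Proof.
  intros Hf. split; intros e; destruct (Hf _ (locally_ball (f (x, y)) e)) as [d Hd];
    exists d; intros u v Hu Hv; apply (Hd (u, v)); split; assumption.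
Qed.

Lemma smooth_on_dRe U f : smooth_on U f -> smooth_on U (dRe f).
Proof. intros Hf n. exact (proj1 (proj2 (Hf (S n)))). Qed.

Lemma smooth_on_dIm U f : smooth_on U f -> smooth_on U (dIm f).
Proof. intros Hf n. exact (proj2 (proj2 (Hf (S n)))). Qed.

Lemma smooth_on_ex_diff_n U f x y n : smooth_on U f -> U (x, y) ->
  ex_diff_n (fun u v => Re (f (u, v))) n x y /\ ex_diff_n (fun u v => Im (f (u, v))) n x y.
Proof.
  revert f. induction n as [|n IH]; intros f Hf Hxy.
  all: destruct (continuous_continuity_2d_pt f x y (Hf O _ Hxy)) as [HRe HIm].
  - split; split; easy.
  - destruct (proj1 (Hf 1%nat) _ Hxy) as [H1 [H2 [H3 H4]]].
    destruct (IH _ (smooth_on_dRe _ _ Hf) Hxy) as [H5 H6].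
    destruct (IH _ (smooth_on_dIm _ _ Hf) Hxy) as [H7 H8].
    split; repeat split; assumption.
Qed.

Lemma locally_2d_ex_diff_n f z0 eps n : 0 < eps -> smooth_on (Cball z0 eps) f ->
  locally_2d (fun u v => ex_diff_n (fun u v => Re (f (u, v))) n u v /\
                         ex_diff_n (fun u v => Im (f (u, v))) n u v) (Re z0) (Im z0).
Proof.
  intros Heps Hf. exists (mkposreal (eps / 2) ltac:(lra)). intros u v Hu Hv.
  apply (smooth_on_ex_diff_n _ _ _ _ _ Hf), Cball_square; assumption.
Qed.

Lemma Schwarz_ex_diff_n (u : R -> R -> R) x y : locally_2d (ex_diff_n u 2) x y ->
  Derive (fun s => Derive (fun t => u s t) y) x = Derive (fun s => Derive (fun t => u t s) x) y.
Proof.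
  intros H. apply Schwarz.
  - eapply locally_2d_impl; [|exact H]. apply locally_2d_forall.
    intros a b (_ & H1 & H2 & (_ & _ & H4 & _) & (_ & H3 & _)). auto.
  - destruct (locally_2d_singleton _ _ _ H) as (_ & _ & _ & _ & (_ & _ & _ & (Hc & _) & _)).
    exact Hc.
  - destruct (locally_2d_singleton _ _ _ H) as (_ & _ & _ & (_ & _ & _ & _ & (Hc & _)) & _).
    exact Hc.
Qed.

Lemma Schwarz_C f z0 eps : 0 < eps -> smooth_on (Cball z0 eps) f ->
  dRe (dIm f) z0 = dIm (dRe f) z0.
Proof.
  intros Heps Hf. pose proof (locally_2d_ex_diff_n f z0 eps 2 Heps Hf) as H.
  apply injective_projections.
  - refine (Schwarz_ex_diff_n (fun u v => Re (f (u, v))) _ _ _).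
    eapply locally_2d_impl; [|exact H]. apply locally_2d_forall. intros u v Huv. exact (proj1 Huv).
  - refine (Schwarz_ex_diff_n (fun u v => Im (f (u, v))) _ _ _).
    eapply locally_2d_impl; [|exact H]. apply locally_2d_forall. intros u v Huv. exact (proj2 Huv).
Qed.

Lemma dRe_conj f : dRe (lam_minus f) = lam_minus (dRe f).
Proof.
  apply functional_extensionality. intros z.
  unfold dRe, lam_minus, Cconj. simpl. f_equal. apply Derive_opp.
Qed.

Lemma dIm_conj f : dIm (lam_minus f) = lam_minus (dIm f).
Proof.
  apply functional_extensionality. intros z.
  unfold dIm, lam_minus, Cconj. simpl. f_equal. apply Derive_opp.
Qed.

Lemma continuous_conj (f : C -> C) z : continuous f z -> continuous (lam_minus f) z.
Proof.
  intros Hf. apply (continuous_comp f Cconj); [exact Hf|].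
  apply filterlim_locally. intros e. exists e. intros w [H1 H2]. split; [exact H1|].
  unfold ball in *; simpl in *. unfold AbsRing_ball, abs, minus, plus, opp in *; simpl in *.
  rewrite <- Rabs_Ropp. replace (- (- snd w + - - snd (f z))) with (snd w + - snd (f z)) by ring.
  exact H2.
Qed.

Lemma Ck_on_conj n U f : Ck_on n U f -> Ck_on n U (lam_minus f).
Proof.
  revert f. induction n as [|n IH]; intros f Hf; simpl in Hf |- *.
  - intros z Hz. apply continuous_conj, Hf, Hz.
  - destruct Hf as [Hex [Hx Hy]]. rewrite dRe_conj, dIm_conj.
    split; [|split; apply IH; assumption].
    intros z Hz. destruct (Hex z Hz) as [H1 [H2 [H3 H4]]].
    split; [exact H1|split; [exact (ex_derive_opp _ _ H2)|split; [exact H3|exact (ex_derive_opp _ _ H4)]]].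
Qed.

Lemma smooth_on_conj U f : smooth_on U f -> smooth_on U (lam_minus f).
Proof. intros Hf n. apply Ck_on_conj, Hf. Qed.

(** * Second-order expansion *)

Definition quad_poly (c1 c2 c11 c12 c22 : C) (h : C) : C :=
  (RtoC (Re h) * c1 + RtoC (Im h) * c2
   + RtoC (/ 2 * Re h ^ 2) * c11 + RtoC (Re h * Im h) * c12 + RtoC (/ 2 * Im h ^ 2) * c22)%C.

Definition taylor2 (f : C -> C) (z0 : C) : C -> C :=
  quad_poly (dRe f z0) (dIm f z0) (dRe (dRe f) z0) (dRe (dIm f) z0) (dIm (dIm f) z0).

Definition second_order_approx (f : C -> C) (z0 : C) (P : C -> C) : Prop :=
  forall e, 0 < e -> exists d, 0 < d /\ forall h, Cmod h < d ->
    Cmod (f (z0 + h) - f z0 - P h)%C <= e * Cmod h ^ 2.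

Lemma DL_pol_2 (u : R -> R -> R) x y a b : DL_pol 2 u x y a b =
  u x y + a * Derive (fun s => u s y) x + b * Derive (fun s => u x s) y
  + / 2 * a ^ 2 * Derive (fun s => Derive (fun s' => u s' y) s) x
  + a * b * Derive (fun s => Derive (fun s' => u s s') y) x
  + / 2 * b ^ 2 * Derive (fun s => Derive (fun s' => u x s') s) y.
Proof. unfold DL_pol, differential, partial_derive, Binomial.C. simpl. field. Qed.

Lemma smooth_taylor2_cubic f z0 eps : 0 < eps -> smooth_on (Cball z0 eps) f ->
  exists D d, 0 < d /\ forall h, Cmod h < d ->
    Cmod (f (z0 + h) - f z0 - taylor2 f z0 h)%C <= D * Cmod h ^ 3.
Proof.
  intros Heps Hf. pose proof (locally_2d_ex_diff_n f z0 eps 3 Heps Hf) as Hloc.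
  destruct z0 as [x0 y0].
  destruct (Taylor_Lagrange_2d (fun u v => Re (f (u, v))) 2 x0 y0) as [D1 [d1 H1]].
  { eapply locally_2d_impl; [|exact Hloc]. apply locally_2d_forall. intros u v Huv. exact (proj1 Huv). }
  destruct (Taylor_Lagrange_2d (fun u v => Im (f (u, v))) 2 x0 y0) as [D2 [d2 H2]].
  { eapply locally_2d_impl; [|exact Hloc]. apply locally_2d_forall. intros u v Huv. exact (proj2 Huv). }
  exists (Rabs D1 + Rabs D2), (Rmin d1 d2). split; [apply Rmin_glb_lt; apply cond_pos|].
  intros [a b] Hh. pose proof (Rmin_l d1 d2). pose proof (Rmin_r d1 d2).
  pose proof (Rmax_abs_le_Cmod (a, b)) as Hm. simpl in Hm.
  pose proof (Rmax_l (Rabs a) (Rabs b)). pose proof (Rmax_r (Rabs a) (Rabs b)).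
  set (m := Cmod (a, b)) in *. set (M := Rmax (Rabs a) (Rabs b)) in *.
  assert (HM3 : 0 <= M ^ 3 <= m ^ 3) by (split; [apply pow_le|apply pow_incr]; pose proof (Rabs_pos a); lra).
  assert (Hu : x0 + a - x0 = a) by ring. assert (Hv : y0 + b - y0 = b) by ring.
  specialize (H1 (x0 + a) (y0 + b) ltac:(rewrite Hu; lra) ltac:(rewrite Hv; lra)).
  specialize (H2 (x0 + a) (y0 + b) ltac:(rewrite Hu; lra) ltac:(rewrite Hv; lra)).
  rewrite Hu, Hv, DL_pol_2 in H1, H2. fold M in H1, H2.
  eapply Rle_trans; [apply Cmod_le_Re_Im|].
  change ((x0, y0) + (a, b))%C with ((x0 + a)%R, (y0 + b)%R).
  clear Hloc Hf. unfold taylor2, quad_poly, dRe, dIm, Re, Im in *; cbn [fst snd Cplus Cminus Copp Cmult RtoC] in *.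
  match goal with |- Rabs ?A + Rabs ?B <= _ =>
    match type of H1 with Rabs ?A' <= _ => replace A with A' by field end;
    match type of H2 with Rabs ?B' <= _ => replace B with B' by field end end.
  assert (D1 * M ^ 3 <= Rabs D1 * m ^ 3)
    by (apply Rle_trans with (Rabs D1 * M ^ 3); [apply Rmult_le_compat_r; [lra|apply Rle_abs]
                                                |apply Rmult_le_compat_l; [apply Rabs_pos|lra]]).
  assert (D2 * M ^ 3 <= Rabs D2 * m ^ 3)
    by (apply Rle_trans with (Rabs D2 * M ^ 3); [apply Rmult_le_compat_r; [lra|apply Rle_abs]
                                                |apply Rmult_le_compat_l; [apply Rabs_pos|lra]]).
  lra.
Qed.

Lemma second_order_approx_of_cubic f z0 P D d : 0 < d ->
  (forall h, Cmod h < d -> Cmod (f (z0 + h) - f z0 - P h)%C <= D * Cmod h ^ 3) ->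
  second_order_approx f z0 P.
Proof.
  intros Hd H e He.
  assert (HD : 0 < Rabs D + 1) by (pose proof (Rabs_pos D); lra).
  exists (Rmin d (e / (Rabs D + 1))). split; [apply Rmin_glb_lt; [lra|apply Rdiv_lt_0_compat; lra]|].
  intros h Hh. pose proof (Rmin_l d (e / (Rabs D + 1))). pose proof (Rmin_r d (e / (Rabs D + 1))).
  set (m := Cmod h) in *. pose proof (Cmod_ge_0 h) as Hm. fold m in Hm.
  assert (Hme : m * (Rabs D + 1) <= e).
  { replace e with (e / (Rabs D + 1) * (Rabs D + 1)) by (field; lra). apply Rmult_le_compat_r; lra. }
  eapply Rle_trans; [apply H; fold m; lra|].
  assert (D * m ^ 3 <= Rabs D * m ^ 3) by (apply Rmult_le_compat_r; [apply pow_le, Hm|apply Rle_abs]).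
  assert (m * (Rabs D + 1) * m ^ 2 <= e * m ^ 2) by (apply Rmult_le_compat_r; [apply pow2_ge_0|exact Hme]).
  assert (0 <= m ^ 3) by (apply pow_le, Hm).
  replace (m * (Rabs D + 1) * m ^ 2) with (Rabs D * m ^ 3 + m ^ 3) in * by ring.
  fold m. lra.
Qed.

Lemma smooth_second_order_approx f z0 eps : 0 < eps -> smooth_on (Cball z0 eps) f ->
  second_order_approx f z0 (taylor2 f z0).
Proof.
  intros Heps Hf. destruct (smooth_taylor2_cubic f z0 eps Heps Hf) as [D [d [Hd H]]].
  exact (second_order_approx_of_cubic _ _ _ _ _ Hd H).
Qed.

Lemma second_order_approx_ext f z0 P Q : (forall h, P h = Q h) ->
  second_order_approx f z0 P -> second_order_approx f z0 Q.
Proof.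
  intros E H e He. destruct (H e He) as [d [Hd D]]. exists d. split; [exact Hd|].
  intros h Hh. rewrite <- E. apply D, Hh.
Qed.

Lemma second_order_approx_minus_scal f g z0 P Q (c : R) :
  second_order_approx f z0 P -> second_order_approx g z0 Q ->
  second_order_approx (fun z => f z - c * g z)%C z0 (fun h => P h - c * Q h)%C.
Proof.
  intros Hf Hg e He.
  assert (He' : 0 < e / (1 + Rabs c)) by (apply Rdiv_lt_0_compat; [lra|pose proof (Rabs_pos c); lra]).
  destruct (Hf _ He') as [d1 [Hd1 D1]]. destruct (Hg _ He') as [d2 [Hd2 D2]].
  exists (Rmin d1 d2). split; [apply Rmin_glb_lt; lra|].
  intros h Hh. specialize (D1 h (Rlt_le_trans _ _ _ Hh (Rmin_l _ _))).
  specialize (D2 h (Rlt_le_trans _ _ _ Hh (Rmin_r _ _))).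
  replace (f (z0 + h) - c * g (z0 + h) - (f z0 - c * g z0) - (P h - c * Q h))%C
    with ((f (z0 + h) - f z0 - P h) - c * (g (z0 + h) - g z0 - Q h))%C by ring.
  eapply Rle_trans; [apply Cmod_triangle|]. rewrite Cmod_opp, Cmod_mult, Cmod_R.
  pose proof (pow2_ge_0 (Cmod h)).
  assert (Rabs c * Cmod (g (z0 + h) - g z0 - Q h)%C <= Rabs c * (e / (1 + Rabs c) * Cmod h ^ 2))
    by (apply Rmult_le_compat_l; [apply Rabs_pos|exact D2]).
  assert (e / (1 + Rabs c) * Cmod h ^ 2 + Rabs c * (e / (1 + Rabs c) * Cmod h ^ 2) = e * Cmod h ^ 2)
    by (field; pose proof (Rabs_pos c); lra).
  lra.
Qed.

Definition lipschitz_at (f : C -> C) (z0 : C) : Prop :=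
  exists K d, 0 <= K /\ 0 < d /\ forall h, Cmod h < d -> Cmod (f (z0 + h) - f z0)%C <= K * Cmod h.

Lemma quad_poly_bound c1 c2 c11 c12 c22 h : Cmod h <= 1 ->
  Cmod (quad_poly c1 c2 c11 c12 c22 h)
  <= (Cmod c1 + Cmod c2 + Cmod c11 + Cmod c12 + Cmod c22) * Cmod h.
Proof.
  intros Hh. set (m := Cmod h) in *.
  pose proof (re_le_Cmod h) as Ha. pose proof (im_le_Cmod h) as Hb. fold m in Ha, Hb.
  pose proof (Rabs_pos (Re h)). pose proof (Rabs_pos (Im h)).
  assert (Hterm : forall (r : R) (c : C), Rabs r <= m -> Cmod (r * c)%C <= m * Cmod c).
  { intros r c Hr. rewrite Cmod_mult, Cmod_R. apply Rmult_le_compat_r; [apply Cmod_ge_0|exact Hr]. }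
  assert (Hsq : forall x, Rabs x <= m -> Rabs (/ 2 * x ^ 2) <= m).
  { intros x Hx. rewrite Rabs_mult, <- RPow_abs, Rabs_pos_eq by lra.
    pose proof (Rabs_pos x). simpl. nra. }
  assert (Hab : Rabs (Re h * Im h) <= m) by (rewrite Rabs_mult; nra).
  pose proof (Hterm _ c1 Ha). pose proof (Hterm _ c2 Hb).
  pose proof (Hterm _ c11 (Hsq _ Ha)). pose proof (Hterm _ c12 Hab). pose proof (Hterm _ c22 (Hsq _ Hb)).
  unfold quad_poly.
  set (t1 := (RtoC (Re h) * c1)%C) in *. set (t2 := (RtoC (Im h) * c2)%C) in *.
  set (t3 := (RtoC (/ 2 * Re h ^ 2) * c11)%C) in *. set (t4 := (RtoC (Re h * Im h) * c12)%C) in *.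
  set (t5 := (RtoC (/ 2 * Im h ^ 2) * c22)%C) in *.
  pose proof (Cmod_triangle (t1 + t2 + t3 + t4) t5). pose proof (Cmod_triangle (t1 + t2 + t3) t4).
  pose proof (Cmod_triangle (t1 + t2) t3). pose proof (Cmod_triangle t1 t2).
  lra.
Qed.

Lemma lipschitz_at_of_approx f z0 c1 c2 c11 c12 c22 :
  second_order_approx f z0 (quad_poly c1 c2 c11 c12 c22) -> lipschitz_at f z0.
Proof.
  intros Hf. destruct (Hf 1 Rlt_0_1) as [d [Hd D]].
  set (K := Cmod c1 + Cmod c2 + Cmod c11 + Cmod c12 + Cmod c22).
  exists (K + 1), (Rmin d 1).
  assert (0 <= K) by (unfold K; pose proof (Cmod_ge_0 c1); pose proof (Cmod_ge_0 c2);
    pose proof (Cmod_ge_0 c11); pose proof (Cmod_ge_0 c12); pose proof (Cmod_ge_0 c22); lra).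
  split; [lra|split; [apply Rmin_glb_lt; lra|]].
  intros h Hh. pose proof (Rmin_l d 1). pose proof (Rmin_r d 1). pose proof (Cmod_ge_0 h).
  specialize (D h ltac:(lra)).
  pose proof (quad_poly_bound c1 c2 c11 c12 c22 h ltac:(lra)) as B. fold K in B.
  replace (f (z0 + h) - f z0)%C with ((f (z0 + h) - f z0 - quad_poly c1 c2 c11 c12 c22 h)
    + quad_poly c1 c2 c11 c12 c22 h)%C by ring.
  eapply Rle_trans; [apply Cmod_triangle|].
  assert (1 * Cmod h ^ 2 <= Cmod h) by (simpl; nra).
  lra.
Qed.

Lemma lipschitz_at_of_smooth f z0 eps : 0 < eps -> smooth_on (Cball z0 eps) f -> lipschitz_at f z0.
Proof. intros Heps Hf. exact (lipschitz_at_of_approx _ _ _ _ _ _ _ (smooth_second_order_approx f z0 eps Heps Hf)). Qed.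

(** * Partial and Wirtinger derivatives *)

Definition is_derive_C (F : R -> C) (s : R) (l : C) : Prop :=
  is_derive (fun t => Re (F t)) s (Re l) /\ is_derive (fun t => Im (F t)) s (Im l).

Section DeriveC.

Variables (F G : R -> C) (s : R) (l m : C).
Hypotheses (HF : is_derive_C F s l) (HG : is_derive_C G s m).

Let is_derive_Rmult (f g : R -> R) df dg :
  is_derive f s df -> is_derive g s dg -> is_derive (fun t => f t * g t) s (df * g s + f s * dg).
Proof. intros Hf Hg. exact (is_derive_mult f g s df dg Hf Hg Rmult_comm). Qed.

Lemma is_derive_C_plus : is_derive_C (fun t => F t + G t)%C s (l + m)%C.
Proof.
  destruct HF as [F1 F2], HG as [G1 G2].
  split; [exact (is_derive_plus _ _ _ _ _ F1 G1)|exact (is_derive_plus _ _ _ _ _ F2 G2)].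
Qed.

Lemma is_derive_C_minus : is_derive_C (fun t => F t - G t)%C s (l - m)%C.
Proof.
  destruct HF as [F1 F2], HG as [G1 G2].
  split; [exact (is_derive_minus _ _ _ _ _ F1 G1)|exact (is_derive_minus _ _ _ _ _ F2 G2)].
Qed.

Lemma is_derive_C_mult : is_derive_C (fun t => F t * G t)%C s (l * G s + F s * m)%C.
Proof.
  destruct HF as [F1 F2], HG as [G1 G2]. split.
  - replace (Re (l * G s + F s * m)%C) with
      (Re l * Re (G s) + Re (F s) * Re m - (Im l * Im (G s) + Im (F s) * Im m))
      by (unfold Re, Im; simpl; ring).
    apply (is_derive_ext (fun t => Re (F t) * Re (G t) - Im (F t) * Im (G t)));
      [reflexivity|].
    exact (is_derive_minus _ _ _ _ _ (is_derive_Rmult _ _ _ _ F1 G1) (is_derive_Rmult _ _ _ _ F2 G2)).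
  - replace (Im (l * G s + F s * m)%C) with
      (Re l * Im (G s) + Re (F s) * Im m + (Im l * Re (G s) + Im (F s) * Re m))
      by (unfold Re, Im; simpl; ring).
    apply (is_derive_ext (fun t => Re (F t) * Im (G t) + Im (F t) * Re (G t)));
      [reflexivity|].
    exact (is_derive_plus _ _ _ _ _ (is_derive_Rmult _ _ _ _ F1 G2) (is_derive_Rmult _ _ _ _ F2 G1)).
Qed.

Lemma is_derive_C_unique : is_derive_C F s m -> l = m.
Proof.
  destruct HF as [F1 F2]. intros [G1 G2].
  apply is_derive_unique in F1, F2, G1, G2.
  unfold Re, Im in *. apply injective_projections; congruence.
Qed.

End DeriveC.

Lemma is_derive_C_const (c : C) s : is_derive_C (fun _ => c) s 0%C.
Proof. split; apply (is_derive_const (V := R_NormedModule)). Qed.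

Lemma is_derive_C_scal (c : C) F s l : is_derive_C F s l ->
  is_derive_C (fun t => c * F t)%C s (c * l)%C.
Proof.
  intros H. replace (c * l)%C with (0 * F s + c * l)%C by ring.
  exact (is_derive_C_mult _ _ _ _ _ (is_derive_C_const c s) H).
Qed.

Lemma is_derive_C_ext_loc F G s l d : 0 < d ->
  (forall t, Rabs (t - s) < d -> F t = G t) -> is_derive_C F s l -> is_derive_C G s l.
Proof.
  intros Hd Heq [F1 F2].
  assert (L : forall P : C -> R, locally s (fun t => P (F t) = P (G t))).
  { intros P. exists (mkposreal d Hd). intros t Ht. rewrite Heq; [reflexivity|exact Ht]. }
  split; eapply is_derive_ext_loc; [apply (L Re)|exact F1|apply (L Im)|exact F2].
Qed.

Definition has_partials (f : C -> C) (z : C) (fx fy : C) : Prop :=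
  is_derive_C (fun t => f (t, Im z)) (Re z) fx /\ is_derive_C (fun t => f (Re z, t)) (Im z) fy.

Section Partials.

Variables (f g : C -> C) (z : C) (fx fy gx gy : C).
Hypotheses (Hf : has_partials f z fx fy) (Hg : has_partials g z gx gy).

Lemma has_partials_plus : has_partials (fun w => f w + g w)%C z (fx + gx)%C (fy + gy)%C.
Proof.
  destruct Hf as [F1 F2], Hg as [G1 G2].
  split; [exact (is_derive_C_plus _ _ _ _ _ F1 G1)|exact (is_derive_C_plus _ _ _ _ _ F2 G2)].
Qed.

Lemma has_partials_minus : has_partials (fun w => f w - g w)%C z (fx - gx)%C (fy - gy)%C.
Proof.
  destruct Hf as [F1 F2], Hg as [G1 G2].
  split; [exact (is_derive_C_minus _ _ _ _ _ F1 G1)|exact (is_derive_C_minus _ _ _ _ _ F2 G2)].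
Qed.

Lemma has_partials_scal (c : C) : has_partials (fun w => c * f w)%C z (c * fx)%C (c * fy)%C.
Proof.
  destruct Hf as [F1 F2]. split; [exact (is_derive_C_scal c _ _ _ F1)|exact (is_derive_C_scal c _ _ _ F2)].
Qed.

Lemma has_partials_unique : dRe f z = fx /\ dIm f z = fy.
Proof.
  destruct Hf as [[F1 F2] [F3 F4]]. apply is_derive_unique in F1, F2, F3, F4.
  unfold dRe, dIm, Re, Im in *. split; apply injective_projections; simpl; assumption.
Qed.

End Partials.

Lemma has_partials_of_Ck_on U f z : Ck_on 1 U f -> U z -> has_partials f z (dRe f z) (dIm f z).
Proof.
  intros [Hex _] Hz. destruct (Hex z Hz) as [H1 [H2 [H3 H4]]].
  split; split; [exact (Derive_correct _ _ H1)|exact (Derive_correct _ _ H2)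
                |exact (Derive_correct _ _ H3)|exact (Derive_correct _ _ H4)].
Qed.

Lemma has_partials_dm f z a1 a2 b1 b2 :
  has_partials (dRe f) z a1 a2 -> has_partials (dIm f) z b1 b2 ->
  has_partials (dm f) z (RtoC (/ 2) * (a1 + Ci * b1))%C (RtoC (/ 2) * (a2 + Ci * b2))%C.
Proof.
  intros Ha Hb.
  exact (has_partials_scal _ _ _ _ (has_partials_plus _ _ _ _ _ _ _ Ha (has_partials_scal _ _ _ _ Hb Ci)) _).
Qed.

Lemma has_partials_dp f z a1 a2 b1 b2 :
  has_partials (dRe f) z a1 a2 -> has_partials (dIm f) z b1 b2 ->
  has_partials (dp f) z (RtoC (/ 2) * (a1 - Ci * b1))%C (RtoC (/ 2) * (a2 - Ci * b2))%C.
Proof.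
  intros Ha Hb.
  exact (has_partials_scal _ _ _ _ (has_partials_minus _ _ _ _ _ _ _ Ha (has_partials_scal _ _ _ _ Hb Ci)) _).
Qed.

(* Product rule: at [s0], (P Q)' = P' Q while (K S)' = 0. *)
Lemma is_derive_C_zero_of_mul_eq (P Q K S : R -> C) s0 d p q k s :
  0 < d -> (forall t, Rabs (t - s0) < d -> (P t * Q t = K t * S t)%C) ->
  is_derive_C P s0 p -> is_derive_C Q s0 q -> is_derive_C K s0 k -> is_derive_C S s0 s ->
  P s0 = 0%C -> K s0 = 0%C -> k = 0%C -> Q s0 <> 0%C -> p = 0%C.
Proof.
  intros Hd Heq HP HQ HK HS P0 K0 k0 Q0.
  pose proof (is_derive_C_ext_loc _ _ _ _ d Hd Heq (is_derive_C_mult _ _ _ _ _ HP HQ)) as H1.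
  pose proof (is_derive_C_unique _ _ _ _ H1 (is_derive_C_mult _ _ _ _ _ HK HS)) as E.
  rewrite P0, K0, k0 in E.
  replace p with ((p * Q s0 + 0 * q) / Q s0)%C by (field; exact Q0).
  rewrite E. field. exact Q0.
Qed.

Lemma partials_zero_of_mul_eq (P Q K S : C -> C) z0 d p1 p2 q1 q2 k1 k2 s1 s2 :
  0 < d -> (forall z, Cball z0 d z -> (P z * Q z = K z * S z)%C) ->
  has_partials P z0 p1 p2 -> has_partials Q z0 q1 q2 ->
  has_partials K z0 k1 k2 -> has_partials S z0 s1 s2 ->
  P z0 = 0%C -> K z0 = 0%C -> k1 = 0%C -> k2 = 0%C -> Q z0 <> 0%C -> p1 = 0%C /\ p2 = 0%C.
Proof.
  intros Hd Heq [P1 P2] [Q1 Q2] [K1 K2] [S1 S2] P0 K0 k10 k20 Q0.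
  assert (Hd2 : 0 < d / 2) by lra. destruct z0 as [x0 y0].
  split.
  - refine (is_derive_C_zero_of_mul_eq _ _ _ _ _ _ _ _ _ _ Hd2 _ P1 Q1 K1 S1 P0 K0 k10 Q0).
    intros t Ht. apply Heq, Cball_square; [exact Ht|rewrite Rminus_eq_0, Rabs_R0; exact Hd2].
  - refine (is_derive_C_zero_of_mul_eq _ _ _ _ _ _ _ _ _ _ Hd2 _ P2 Q2 K2 S2 P0 K0 k20 Q0).
    intros t Ht. apply Heq, Cball_square; [rewrite Rminus_eq_0, Rabs_R0; exact Hd2|exact Ht].
Qed.

Lemma dRe_dIm_of_dp_dm f g z (c : C) : dp f z = (c * dp g z)%C -> dm f z = (c * dm g z)%C ->
  dRe f z = (c * dRe g z)%C /\ dIm f z = (c * dIm g z)%C.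
Proof.
  assert (ReE : forall f, dRe f z = (dp f z + dm f z)%C).
  { intros h. unfold dp, dm. destruct (dRe h z), (dIm h z).
    apply injective_projections; simpl; field. }
  assert (ImE : forall f, dIm f z = (Ci * (dp f z - dm f z))%C).
  { intros h. unfold dp, dm. destruct (dRe h z), (dIm h z).
    apply injective_projections; simpl; field. }
  intros Hp Hm. rewrite !ReE, !ImE, Hp, Hm. split; ring.
Qed.

Lemma dp_dp_eq f z a1 a2 b1 b2 :
  has_partials (dRe f) z a1 a2 -> has_partials (dIm f) z b1 b2 ->
  dp (dp f) z = (RtoC (/ 2) * (RtoC (/ 2) * (a1 - Ci * b1) - Ci * (RtoC (/ 2) * (a2 - Ci * b2))))%C.
Proof.
  intros Ha Hb. destruct (has_partials_unique _ _ _ _ (has_partials_dp _ _ _ _ _ _ Ha Hb)) as [E1 E2].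
  change (dp (dp f) z) with (RtoC (/ 2) * (dRe (dp f) z - Ci * dIm (dp f) z))%C.
  rewrite E1, E2. reflexivity.
Qed.

Lemma dm_dm_eq f z a1 a2 b1 b2 :
  has_partials (dRe f) z a1 a2 -> has_partials (dIm f) z b1 b2 ->
  dm (dm f) z = (RtoC (/ 2) * (RtoC (/ 2) * (a1 + Ci * b1) + Ci * (RtoC (/ 2) * (a2 + Ci * b2))))%C.
Proof.
  intros Ha Hb. destruct (has_partials_unique _ _ _ _ (has_partials_dm _ _ _ _ _ _ Ha Hb)) as [E1 E2].
  change (dm (dm f) z) with (RtoC (/ 2) * (dRe (dm f) z + Ci * dIm (dm f) z))%C.
  rewrite E1, E2. reflexivity.
Qed.

Lemma quad_poly_minus_scal c1 c2 c11 c12 c22 d1 d2 d11 d12 d22 (t : R) h :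
  (quad_poly c1 c2 c11 c12 c22 h - t * quad_poly d1 d2 d11 d12 d22 h)%C
  = quad_poly (c1 - t * d1) (c2 - t * d2) (c11 - t * d11) (c12 - t * d12) (c22 - t * d22) h.
Proof. unfold quad_poly. ring. Qed.

Lemma quad_poly_holomorphic c11 c12 c22 h :
  (c11 + Ci * c12 = 0)%C -> (c12 + Ci * c22 = 0)%C ->
  quad_poly 0 0 c11 c12 c22 h
  = (RtoC (/ 2) * (RtoC (/ 2) * (RtoC (/ 2) * (c11 - Ci * c12) - Ci * (RtoC (/ 2) * (c12 - Ci * c22))))
     * h * h)%C.
Proof.
  destruct c11 as [p1 q1], c12 as [p2 q2], c22 as [p3 q3], h as [a b].
  unfold Ci. intros H1 H2. injection H1. injection H2. simpl. intros E1 E2 E3 E4.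
  replace p1 with q2 by lra. replace q1 with (- p2) by lra.
  replace p3 with (- q2) by lra. replace q3 with p2 by lra.
  unfold quad_poly, Re, Im. apply injective_projections; simpl; field.
Qed.

Lemma quad_poly_antiholomorphic c11 c12 c22 h :
  (c11 - Ci * c12 = 0)%C -> (c12 - Ci * c22 = 0)%C ->
  quad_poly 0 0 c11 c12 c22 h
  = (RtoC (/ 2) * (RtoC (/ 2) * (RtoC (/ 2) * (c11 + Ci * c12) + Ci * (RtoC (/ 2) * (c12 + Ci * c22))))
     * Cconj h * Cconj h)%C.
Proof.
  destruct c11 as [p1 q1], c12 as [p2 q2], c22 as [p3 q3], h as [a b].
  unfold Ci. intros H1 H2. injection H1. injection H2. simpl. intros E1 E2 E3 E4.
  replace p1 with (- q2) by lra. replace q1 with p2 by lra.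
  replace p3 with q2 by lra. replace q3 with (- p2) by lra.
  unfold quad_poly, Cconj, Re, Im. apply injective_projections; simpl; field.
Qed.

(** * The break-up point *)

Section Breakup.

Variables (lam_p lam_m mu_p mu_m : C -> C) (z0 : C) (eps t0 : R).

Let U := Cball z0 eps.
Let ratio z := ((mu_p z - mu_m z) / (lam_p z - lam_m z))%C.

Hypotheses (Heps : 0 < eps)
  (Hlp : smooth_on U lam_p) (Hlm : smooth_on U lam_m)
  (Hmp : smooth_on U mu_p) (Hmm : smooth_on U mu_m)
  (Hne : forall z, U z -> lam_p z <> lam_m z)
  (Hpde_p : forall z, U z -> dm mu_p z = (ratio z * dm lam_p z)%C)
  (Hpde_m : forall z, U z -> dp mu_m z = (ratio z * dp lam_m z)%C)
  (Hhod : (mu_p z0 - mu_m z0)%C = (t0 * (lam_p z0 - lam_m z0))%C)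
  (Hbp : dp mu_p z0 = (t0 * dp lam_p z0)%C)
  (Hbm : dm mu_m z0 = (t0 * dm lam_m z0)%C).

Let Hz0 : U z0.
Proof. unfold U, Cball. replace (z0 - z0)%C with (RtoC 0) by ring. rewrite Cmod_0. exact Heps. Qed.

Let Hden z : U z -> (lam_p z - lam_m z)%C <> 0%C.
Proof. intros Hz E. apply (Hne z Hz). replace (lam_p z) with (lam_p z - lam_m z + lam_m z)%C by ring.
  rewrite E. ring. Qed.

Let ratio_z0 : ratio z0 = t0.
Proof. unfold ratio. rewrite Hhod. field. exact (Hden z0 Hz0). Qed.

Let partials f : smooth_on U f -> has_partials f z0 (dRe f z0) (dIm f z0).
Proof. intros Hf. exact (has_partials_of_Ck_on _ _ _ (Hf 1%nat) Hz0). Qed.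

Let partials2 f : smooth_on U f ->
  has_partials (dRe f) z0 (dRe (dRe f) z0) (dIm (dRe f) z0) /\
  has_partials (dIm f) z0 (dRe (dIm f) z0) (dIm (dIm f) z0).
Proof. intros Hf. split; apply partials; [apply smooth_on_dRe|apply smooth_on_dIm]; exact Hf. Qed.

Lemma breakup_first_order_p : dRe mu_p z0 = (t0 * dRe lam_p z0)%C /\ dIm mu_p z0 = (t0 * dIm lam_p z0)%C.
Proof. apply dRe_dIm_of_dp_dm; [exact Hbp|rewrite Hpde_p, ratio_z0 by exact Hz0; reflexivity]. Qed.

Lemma breakup_first_order_m : dRe mu_m z0 = (t0 * dRe lam_m z0)%C /\ dIm mu_m z0 = (t0 * dIm lam_m z0)%C.
Proof. apply dRe_dIm_of_dp_dm; [rewrite Hpde_m, ratio_z0 by exact Hz0; reflexivity|exact Hbm]. Qed.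

(* The identity [d mu = ratio * d lam] multiplied out reads [P Q = K S], with [K] vanishing to
   second order at [z0] because of the first-order conditions of both branches. *)
Lemma breakup_second_order (d : (C -> C) -> C -> C) mu lam a1 a2 b1 b2 :
  (forall z, U z -> d mu z = (ratio z * d lam z)%C) ->
  has_partials (d mu) z0 a1 a2 -> has_partials (d lam) z0 b1 b2 ->
  (a1 - t0 * b1 = 0)%C /\ (a2 - t0 * b2 = 0)%C.
Proof.
  intros Hpde Ha Hb.
  destruct breakup_first_order_p as [Fp1 Fp2]. destruct breakup_first_order_m as [Fm1 Fm2].
  eapply (partials_zero_of_mul_eq (fun z => d mu z - t0 * d lam z)%C (fun z => lam_p z - lam_m z)%C
          (fun z => (mu_p z - mu_m z) - t0 * (lam_p z - lam_m z))%C (d lam) z0 eps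
          _ _ _ _ _ _ b1 b2 Heps).
  - intros z Hz. rewrite Hpde by exact Hz. unfold ratio. field. exact (Hden z Hz).
  - exact (has_partials_minus _ _ _ _ _ _ _ Ha (has_partials_scal _ _ _ _ Hb t0)).
  - exact (has_partials_minus _ _ _ _ _ _ _ (partials _ Hlp) (partials _ Hlm)).
  - exact (has_partials_minus _ _ _ _ _ _ _
      (has_partials_minus _ _ _ _ _ _ _ (partials _ Hmp) (partials _ Hmm))
      (has_partials_scal _ _ _ _ (has_partials_minus _ _ _ _ _ _ _ (partials _ Hlp) (partials _ Hlm)) t0)).
  - exact Hb.
  - rewrite Hpde, ratio_z0 by exact Hz0. ring.
  - rewrite Hhod. ring.
  - rewrite Fp1, Fm1. ring.
  - rewrite Fp2, Fm2. ring.
  - exact (Hden z0 Hz0).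
Qed.

Lemma taylor2_breakup_p h :
  (taylor2 mu_p z0 h - t0 * taylor2 lam_p z0 h)%C
  = (RtoC (/ 2) * (dp (dp mu_p) z0 - t0 * dp (dp lam_p) z0) * h * h)%C.
Proof.
  destruct (partials2 _ Hmp) as [Mx My]. destruct (partials2 _ Hlp) as [Lx Ly].
  destruct (breakup_second_order dm mu_p lam_p _ _ _ _ Hpde_p
              (has_partials_dm _ _ _ _ _ _ Mx My) (has_partials_dm _ _ _ _ _ _ Lx Ly)) as [S1 S2].
  destruct breakup_first_order_p as [F1 F2].
  rewrite (dp_dp_eq _ _ _ _ _ _ Mx My), (dp_dp_eq _ _ _ _ _ _ Lx Ly).
  rewrite <- (Schwarz_C mu_p z0 eps Heps Hmp), <- (Schwarz_C lam_p z0 eps Heps Hlp) in S2 |- *.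
  unfold taylor2. rewrite quad_poly_minus_scal, F1, F2.
  replace (t0 * dRe lam_p z0 - t0 * dRe lam_p z0)%C with (RtoC 0) by ring.
  replace (t0 * dIm lam_p z0 - t0 * dIm lam_p z0)%C with (RtoC 0) by ring.
  rewrite quad_poly_holomorphic.
  - f_equal. f_equal. f_equal. ring.
  - rewrite <- (Cmult_0_r (RtoC 2)), <- S1. unfold RtoC. apply injective_projections; simpl; field.
  - rewrite <- (Cmult_0_r (RtoC 2)), <- S2. unfold RtoC. apply injective_projections; simpl; field.
Qed.

Lemma taylor2_breakup_m h :
  (taylor2 mu_m z0 h - t0 * taylor2 lam_m z0 h)%C
  = (RtoC (/ 2) * (dm (dm mu_m) z0 - t0 * dm (dm lam_m) z0) * Cconj h * Cconj h)%C.
Proof.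
  destruct (partials2 _ Hmm) as [Mx My]. destruct (partials2 _ Hlm) as [Lx Ly].
  destruct (breakup_second_order dp mu_m lam_m _ _ _ _ Hpde_m
              (has_partials_dp _ _ _ _ _ _ Mx My) (has_partials_dp _ _ _ _ _ _ Lx Ly)) as [S1 S2].
  destruct breakup_first_order_m as [F1 F2].
  rewrite (dm_dm_eq _ _ _ _ _ _ Mx My), (dm_dm_eq _ _ _ _ _ _ Lx Ly).
  rewrite <- (Schwarz_C mu_m z0 eps Heps Hmm), <- (Schwarz_C lam_m z0 eps Heps Hlm) in S2 |- *.
  unfold taylor2. rewrite quad_poly_minus_scal, F1, F2.
  replace (t0 * dRe lam_m z0 - t0 * dRe lam_m z0)%C with (RtoC 0) by ring.
  replace (t0 * dIm lam_m z0 - t0 * dIm lam_m z0)%C with (RtoC 0) by ring.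
  rewrite quad_poly_antiholomorphic.
  - f_equal. f_equal. f_equal. ring.
  - rewrite <- (Cmult_0_r (RtoC 2)), <- S1. unfold RtoC. apply injective_projections; simpl; field.
  - rewrite <- (Cmult_0_r (RtoC 2)), <- S2. unfold RtoC. apply injective_projections; simpl; field.
Qed.

Lemma breakup_approx :
  second_order_approx (fun z => mu_p z - t0 * lam_p z)%C z0
    (fun h => RtoC (/ 2) * (dp (dp mu_p) z0 - t0 * dp (dp lam_p) z0) * h * h)%C /\
  second_order_approx (fun z => mu_m z - t0 * lam_m z)%C z0
    (fun h => RtoC (/ 2) * (dm (dm mu_m) z0 - t0 * dm (dm lam_m) z0) * Cconj h * Cconj h)%C.
Proof.
  split; [apply (second_order_approx_ext _ _ _ _ taylor2_breakup_p)
         |apply (second_order_approx_ext _ _ _ _ taylor2_breakup_m)];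
  apply second_order_approx_minus_scal; apply (smooth_second_order_approx _ _ eps Heps); assumption.
Qed.

End Breakup.

(** * Square-root asymptotics *)

Definition is_lim_right0 (f : R -> C) (L : C) : Prop :=
  forall e, 0 < e -> exists d, 0 < d /\ forall k, 0 < k < d -> Cmod (f k - L)%C < e.

Definition continuous_on_0 (d0 : R) (f : R -> C) : Prop :=
  forall k, 0 < k < d0 -> forall e, 0 < e -> exists d, 0 < d /\
    forall k', 0 < k' < d0 -> Rabs (k' - k) < d -> Cmod (f k' - f k)%C < e.

Lemma filterlim_of_is_lim_right0 f L : is_lim_right0 f L -> filterlim f (at_right 0) (locally L).
Proof.
  intros H. apply filterlim_locally. intros e.
  destruct (H e (cond_pos e)) as [d [Hd D]].
  exists (mkposreal d Hd). intros k Hk Hk0. simpl in Hk.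
  assert (Hk' : 0 < k < d).
  { unfold ball in Hk; simpl in Hk; unfold AbsRing_ball, abs, minus, plus, opp in Hk; simpl in Hk.
    rewrite Ropp_0, Rplus_0_r in Hk. unfold Rabs in Hk; destruct Rcase_abs; lra. }
  specialize (D k Hk'). split; simpl; unfold AbsRing_ball, abs, minus, plus, opp; simpl.
  - eapply Rle_lt_trans; [|exact D]. apply (re_le_Cmod (f k - L)%C).
  - eapply Rle_lt_trans; [|exact D]. apply (im_le_Cmod (f k - L)%C).
Qed.

Lemma continuous_on_0_scal (a : R -> R) (h : R -> C) d0 :
  (forall k, 0 < k < d0 -> continuity_pt a k) -> continuous_on_0 d0 h ->
  continuous_on_0 d0 (fun k => RtoC (a k) * h k)%C.
Proof.
  intros Ha Hh k Hk e He.
  set (B := Rabs (a k) + 1). set (H := Cmod (h k)).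
  assert (HB : 0 < B) by (unfold B; pose proof (Rabs_pos (a k)); lra).
  assert (HH : 0 <= H) by apply Cmod_ge_0.
  destruct (Ha k Hk (Rmin 1 (e / (2 * (H + 1))))) as [da [Hda Da]].
  { apply Rmin_glb_lt; [lra|apply Rdiv_lt_0_compat; lra]. }
  destruct (Hh k Hk (e / (2 * B))) as [db [Hdb Db]]; [apply Rdiv_lt_0_compat; lra|].
  exists (Rmin da db). split; [apply Rmin_glb_lt; lra|].
  intros k' Hk' Hkk.
  assert (Dk : Rabs (a k' - a k) < Rmin 1 (e / (2 * (H + 1)))).
  { destruct (Req_dec k' k) as [->|Hne]; [rewrite Rminus_eq_0, Rabs_R0; apply Rmin_glb_lt; [lra|apply Rdiv_lt_0_compat; lra]|].
    apply Da. split; [split; [exact I|auto]|exact (Rlt_le_trans _ _ _ Hkk (Rmin_l _ _))]. }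
  specialize (Db k' Hk' (Rlt_le_trans _ _ _ Hkk (Rmin_r _ _))).
  replace (RtoC (a k') * h k' - RtoC (a k) * h k)%C with
    (RtoC (a k') * (h k' - h k) + RtoC (a k' - a k) * h k)%C
    by (unfold RtoC; apply injective_projections; simpl; ring).
  eapply Rle_lt_trans; [apply Cmod_triangle|]. rewrite !Cmod_mult, !Cmod_R. fold H.
  pose proof (Rmin_l 1 (e / (2 * (H + 1)))). pose proof (Rmin_r 1 (e / (2 * (H + 1)))).
  assert (Hak : Rabs (a k') <= B).
  { unfold B. pose proof (Rabs_triang_inv (a k') (a k)). lra. }
  pose proof (Cmod_ge_0 (h k' - h k)%C). pose proof (Rabs_pos (a k' - a k)). pose proof (Rabs_pos (a k')).
  assert (Rabs (a k') * Cmod (h k' - h k)%C <= B * (e / (2 * B))) by (apply Rmult_le_compat; lra).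
  assert (Rabs (a k' - a k) * H <= e / (2 * (H + 1)) * H) by (apply Rmult_le_compat_r; lra).
  assert (B * (e / (2 * B)) = e / 2) by (field; lra).
  assert (e / (2 * (H + 1)) * H < e / 2).
  { apply Rlt_le_trans with (e / (2 * (H + 1)) * (H + 1)).
    - apply Rmult_lt_compat_l; [apply Rdiv_lt_0_compat; lra|lra].
    - right. field. lra. }
  lra.
Qed.

Lemma continuous_on_0_div_sqrt (h : R -> C) d0 : continuous_on_0 d0 h ->
  continuous_on_0 d0 (fun k => RtoC (/ sqrt k) * h k)%C.
Proof.
  apply continuous_on_0_scal. intros k Hk.
  apply (continuity_pt_inv sqrt); [apply continuity_pt_sqrt; lra|].
  apply Rgt_not_eq, sqrt_lt_R0; lra.
Qed.

Lemma exists_Csqrt (c : C) : exists s, (s * s)%C = c.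
Proof.
  pose proof (re_le_Cmod c) as H1. pose proof (Cmod2_alt c) as HC.
  assert (HA : 0 <= (Cmod c + Re c) / 2) by (unfold Rabs in H1; destruct Rcase_abs; lra).
  assert (HB : 0 <= (Cmod c - Re c) / 2) by (unfold Rabs in H1; destruct Rcase_abs; lra).
  set (sg := if Rle_dec 0 (Im c) then 1 else -1).
  assert (Hsg : sg * sg = 1) by (unfold sg; destruct Rle_dec; ring).
  exists (sqrt ((Cmod c + Re c) / 2), sg * sqrt ((Cmod c - Re c) / 2)).
  apply injective_projections; simpl.
  - replace (sg * sqrt ((Cmod c - Re c) / 2) * (sg * sqrt ((Cmod c - Re c) / 2)))
      with ((sg * sg) * (sqrt ((Cmod c - Re c) / 2) * sqrt ((Cmod c - Re c) / 2))) by ring.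
    rewrite !sqrt_sqrt, Hsg by assumption. unfold Re. lra.
  - replace (sqrt ((Cmod c + Re c) / 2) * (sg * sqrt ((Cmod c - Re c) / 2)) +
             sg * sqrt ((Cmod c - Re c) / 2) * sqrt ((Cmod c + Re c) / 2))
      with (2 * sg * (sqrt ((Cmod c + Re c) / 2) * sqrt ((Cmod c - Re c) / 2))) by ring.
    rewrite <- sqrt_mult_alt by assumption.
    replace ((Cmod c + Re c) / 2 * ((Cmod c - Re c) / 2)) with (Rsqr (Im c / 2))
      by (unfold Rsqr; simpl in HC; nra).
    rewrite sqrt_Rsqr_abs. unfold sg. destruct Rle_dec.
    + rewrite Rabs_right by lra. unfold Im. field.
    + rewrite Rabs_left by lra. unfold Im. field.
Qed.

Lemma square_near_dichotomy (w s : C) : let m := Cmod s in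
  0 < m -> Cmod (w * w - s * s)%C < m * m / 4 ->
  (Cmod (w - s)%C < m / 2 /\ m * m / 2 <= Re (Cconj s * w)%C) \/
  (Cmod (w + s)%C < m / 2 /\ Re (Cconj s * w)%C <= - (m * m / 2)).
Proof.
  intros m Hm Hw.
  assert (Hprod : Cmod (w - s)%C * Cmod (w + s)%C < m * m / 4).
  { rewrite <- Cmod_mult. replace ((w - s) * (w + s))%C with (w * w - s * s)%C by ring. exact Hw. }
  assert (Hss : Re (Cconj s * s)%C = m * m).
  { unfold m. destruct s as [s1 s2]. unfold Cmod, Re; simpl. rewrite sqrt_sqrt by nra. ring. }
  pose proof (Cmod_ge_0 (w - s)%C). pose proof (Cmod_ge_0 (w + s)%C).
  destruct (Rlt_dec (Cmod (w - s)%C) (m / 2)) as [H1|H1].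
  - left. split; [exact H1|].
    replace (Re (Cconj s * w)%C) with (Re (Cconj s * (w - s))%C + Re (Cconj s * s)%C)
      by (unfold Re; simpl; ring).
    rewrite Hss. pose proof (re_le_Cmod (Cconj s * (w - s))%C) as HH.
    rewrite Cmod_mult, Cmod_conj in HH. fold m in HH.
    assert (m * Cmod (w - s)%C <= m * (m / 2)) by (apply Rmult_le_compat_l; lra).
    unfold Rabs in HH; destruct Rcase_abs; lra.
  - right.
    assert (H2 : Cmod (w + s)%C < m / 2).
    { destruct (Rlt_dec (Cmod (w + s)%C) (m / 2)) as [H2|H2]; [exact H2|].
      assert (m / 2 * (m / 2) <= Cmod (w - s)%C * Cmod (w + s)%C) by (apply Rmult_le_compat; lra).
      lra. }
    split; [exact H2|].
    replace (Re (Cconj s * w)%C) with (Re (Cconj s * (w + s))%C - Re (Cconj s * s)%C)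
      by (unfold Re; simpl; ring).
    rewrite Hss. pose proof (re_le_Cmod (Cconj s * (w + s))%C) as HH.
    rewrite Cmod_mult, Cmod_conj in HH. fold m in HH.
    assert (m * Cmod (w + s)%C <= m * (m / 2)) by (apply Rmult_le_compat_l; lra).
    unfold Rabs in HH; destruct Rcase_abs; lra.
Qed.

Lemma continuity_pt_Re_mul (s : C) f d0 k : continuous_on_0 d0 f -> 0 < k < d0 ->
  continuity_pt (fun k => Re (Cconj s * f k)%C) k.
Proof.
  intros Hf Hk e He.
  assert (He' : 0 < e / (Cmod s + 1)) by (apply Rdiv_lt_0_compat; [lra|pose proof (Cmod_ge_0 s); lra]).
  destruct (Hf k Hk _ He') as [d [Hd D]].
  exists (Rmin d (Rmin k (d0 - k))). split; [repeat apply Rmin_glb_lt; lra|].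
  intros y [_ Hy]. simpl in Hy. unfold R_dist in Hy.
  pose proof (Rmin_l d (Rmin k (d0 - k))). pose proof (Rmin_r d (Rmin k (d0 - k))).
  pose proof (Rmin_l k (d0 - k)). pose proof (Rmin_r k (d0 - k)).
  assert (Hy3 : 0 < y < d0) by (unfold Rabs in Hy; destruct Rcase_abs; lra).
  specialize (D y Hy3 ltac:(lra)).
  change (Rabs (Re (Cconj s * f y)%C - Re (Cconj s * f k)%C) < e).
  replace (Re (Cconj s * f y)%C - Re (Cconj s * f k)%C) with (Re (Cconj s * (f y - f k))%C)
    by (unfold Re; simpl; ring).
  eapply Rle_lt_trans; [apply re_le_Cmod|]. rewrite Cmod_mult, Cmod_conj.
  pose proof (Cmod_ge_0 s). pose proof (Cmod_ge_0 (f y - f k)%C).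
  apply Rle_lt_trans with (Cmod s * (e / (Cmod s + 1))); [apply Rmult_le_compat_l; lra|].
  apply Rlt_le_trans with ((Cmod s + 1) * (e / (Cmod s + 1))); [nra|].
  right; field; lra.
Qed.

Lemma pos_on_interval_of_nonzero (g : R -> R) a b k1 :
  (forall k, a < k < b -> continuity_pt g k) -> (forall k, a < k < b -> g k <> 0) ->
  a < k1 < b -> 0 < g k1 -> forall k, a < k < b -> 0 < g k.
Proof.
  intros Hc Hnz Hk1 Hg1 k Hk.
  destruct (Rlt_dec 0 (g k)) as [Hpos|Hpos]; [exact Hpos|exfalso].
  assert (Hneg : g k < 0) by (pose proof (Hnz k Hk); lra).
  destruct (Rlt_dec k k1) as [Hlt|Hge].
  - destruct (Ranalysis5.IVT_interv g k k1) as [z [Hz Ez]]; try assumption.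
    + intros x Hx. apply Hc. lra.
    + exact (Hnz z ltac:(lra) Ez).
  - assert (Hlt : k1 < k) by (destruct (Req_dec k k1) as [->|]; lra).
    destruct (Ranalysis5.IVT_interv (fun x => - g x) k1 k) as [z [Hz Ez]]; try lra.
    + intros x Hx. apply continuity_pt_opp, Hc. lra.
    + apply (Hnz z ltac:(lra)). lra.
Qed.

Lemma is_lim_right0_of_square_zero f : is_lim_right0 (fun k => f k * f k)%C 0 -> is_lim_right0 f 0.
Proof.
  intros H e He. destruct (H (e * e) ltac:(nra)) as [d [Hd D]]. exists d. split; [exact Hd|].
  intros k Hk. specialize (D k Hk).
  replace (f k * f k - 0)%C with (f k * f k)%C in D by ring.
  replace (f k - 0)%C with (f k) by ring.
  rewrite Cmod_mult in D. pose proof (Cmod_ge_0 (f k)). nra.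
Qed.

(* Switching from [s] to [-s] would make the continuous function [Re (conj s * f)] cross the gap
   [(-|s|^2/2, |s|^2/2)] that the dichotomy forbids. *)
Lemma continuous_near_root f s d d0 : 0 < d <= d0 -> continuous_on_0 d0 f -> 0 < Cmod s ->
  (forall k, 0 < k < d -> Cmod (f k * f k - s * s)%C < Cmod s * Cmod s / 4) ->
  exists s', (s' * s' = s * s)%C /\ forall k, 0 < k < d -> Cmod (f k - s')%C < Cmod s / 2.
Proof.
  intros Hd Hf Hm Hsq. set (m := Cmod s) in *.
  set (g s' k := Re (Cconj s' * f k)%C).
  assert (Dich : forall s', (s' * s' = s * s)%C -> Cmod s' = m -> forall k, 0 < k < d ->
    (Cmod (f k - s')%C < m / 2 /\ m * m / 2 <= g s' k) \/ (g s' k <= - (m * m / 2))).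
  { intros s' Hss Hms k Hk. rewrite <- Hms.
    destruct (square_near_dichotomy (f k) s') as [[A B]|[_ B]]; [lra| |left; auto|right; exact B].
    rewrite Hss, Hms. apply Hsq, Hk. }
  set (k1 := d / 2). assert (Hk1 : 0 < k1 < d) by (unfold k1; lra).
  assert (Hsel : exists s', (s' * s' = s * s)%C /\ Cmod s' = m /\ 0 < g s' k1).
  { destruct (Dich s eq_refl eq_refl k1 Hk1) as [[_ G]|G].
    - exists s. split; [reflexivity|split; [reflexivity|nra]].
    - exists (- s)%C. split; [ring|split; [apply Cmod_opp|]].
      unfold g in *. replace (Re (Cconj (- s) * f k1)%C) with (- Re (Cconj s * f k1)%C)
        by (unfold Re; simpl; ring). nra. }
  destruct Hsel as [s' [Hss [Hms Hg1]]].
  exists s'. split; [exact Hss|]. intros k Hk.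
  assert (Hpos : 0 < g s' k).
  { apply (pos_on_interval_of_nonzero (g s') 0 d k1); try assumption.
    - intros x Hx. apply (continuity_pt_Re_mul s' f d0); [exact Hf|lra].
    - intros x Hx. destruct (Dich s' Hss Hms x Hx) as [[_ G]|G]; nra. }
  destruct (Dich s' Hss Hms k Hk) as [[A _]|G]; [exact A|nra].
Qed.

Lemma is_lim_right0_of_near_root f s d : 0 < d -> 0 < Cmod s ->
  (forall k, 0 < k < d -> Cmod (f k - s)%C < Cmod s / 2) ->
  is_lim_right0 (fun k => f k * f k)%C (s * s)%C -> is_lim_right0 f s.
Proof.
  intros Hd Hm Near Hsq e He. set (m := Cmod s) in *.
  destruct (Hsq (e * m)) as [d1 [Hd1 D]]; [nra|].
  exists (Rmin d1 d). split; [apply Rmin_glb_lt; lra|].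
  intros k Hk. pose proof (Rmin_l d1 d). pose proof (Rmin_r d1 d).
  specialize (Near k ltac:(lra)). specialize (D k ltac:(lra)).
  assert (Hp : Cmod (f k - s)%C * Cmod (f k + s)%C < e * m).
  { rewrite <- Cmod_mult. replace ((f k - s) * (f k + s))%C with (f k * f k - s * s)%C by ring.
    exact D. }
  assert (Hfs : m <= Cmod (f k + s)%C).
  { pose proof (Cmod_triangle (f k + s) (- (f k - s))%C) as T.
    replace (f k + s + - (f k - s))%C with (RtoC 2 * s)%C in T by ring.
    rewrite Cmod_opp, Cmod_mult, Cmod_R, Rabs_right in T by lra. fold m in T. lra. }
  pose proof (Cmod_ge_0 (f k - s)%C).
  apply Rmult_lt_reg_l with m; [exact Hm|]. nra.
Qed.

Lemma is_lim_right0_sqrt f c d0 : 0 < d0 -> continuous_on_0 d0 f ->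
  is_lim_right0 (fun k => f k * f k)%C c -> exists L, is_lim_right0 f L /\ (L * L)%C = c.
Proof.
  intros Hd0 Hf Hsq.
  destruct (Ceq_dec c 0) as [->|Hc0].
  { exists (RtoC 0). split; [apply is_lim_right0_of_square_zero, Hsq|ring]. }
  destruct (exists_Csqrt c) as [s Hs]. subst c.
  assert (Hm : 0 < Cmod s) by (apply Cmod_gt_0; intros E; apply Hc0; rewrite E; ring).
  destruct (Hsq (Cmod s * Cmod s / 4) ltac:(nra)) as [d [Hd D]].
  destruct (continuous_near_root f s (Rmin d d0) d0) as [s' [Hss Near]]; try assumption.
  - split; [apply Rmin_glb_lt; lra|apply Rmin_r].
  - intros k Hk. apply D. pose proof (Rmin_l d d0). lra.
  - exists s'. split; [|exact Hss].
    rewrite <- Hss in Hsq. assert (Hms : Cmod s' = Cmod s).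
    { apply Rsqr_inj; try apply Cmod_ge_0. unfold Rsqr. rewrite <- !Cmod_mult, Hss. reflexivity. }
    apply (is_lim_right0_of_near_root f s' (Rmin d d0)); [apply Rmin_glb_lt; lra|lra| |exact Hsq].
    rewrite Hms. exact Near.
Qed.

Lemma sq_le_of_quadratic_ineq (al Cc x y k : R) : 0 < al -> 0 <= Cc -> 0 <= x -> 0 <= y -> 0 < k <= 1 ->
  al * (y * y) <= k * x + Cc * k * y ->
  y * y <= (4 * Cc * Cc / (al * al) + 2 * x / al) * k.
Proof.
  intros Hal HC Hx Hy Hk H.
  replace ((4 * Cc * Cc / (al * al) + 2 * x / al) * k) with ((4 * Cc * Cc * k + 2 * x * al * k) / (al * al))
    by (field; lra).
  apply Rmult_le_reg_l with (al * al); [nra|].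
  replace (al * al * ((4 * Cc * Cc * k + 2 * x * al * k) / (al * al))) with (4 * Cc * Cc * k + 2 * x * al * k)
    by (field; lra).
  destruct (Rle_dec (al * y) (2 * Cc * k)) as [H1|H1].
  - assert (al * y * (al * y) <= 2 * Cc * k * (2 * Cc * k)) by (apply Rmult_le_compat; nra).
    assert (Cc * Cc * k * k <= Cc * Cc * k) by (assert (0 <= Cc * Cc) by nra; nra).
    nra.
  - assert (Cc * k * y <= al * y * y / 2) by nra.
    nra.
Qed.

Lemma scaled_square_sub_eq (u X A : C) (k : R) : 0 < k -> A <> 0%C ->
  ((RtoC (/ sqrt k) * u) * (RtoC (/ sqrt k) * u) - RtoC 2 * X / A)%C =
  (RtoC (/ k) * (RtoC 2 / A) * - (RtoC k * X - RtoC (/ 2) * A * u * u))%C.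
Proof.
  intros Hk HA.
  replace (RtoC (/ sqrt k) * u * (RtoC (/ sqrt k) * u))%C with (RtoC (/ sqrt k * / sqrt k) * (u * u))%C
    by (unfold RtoC; apply injective_projections; simpl; ring).
  rewrite <- Rinv_mult, sqrt_sqrt, (RtoC_inv k), (RtoC_inv 2) by lra.
  field. split; [exact HA|intros E; injection E; lra].
Qed.

Section QuadraticRelation.

Variables (h : R -> C) (X A : C) (Cc d0 : R).
Hypotheses (HA : A <> 0%C) (HCc : 0 <= Cc) (Hd0 : 0 < d0)
  (Hh0 : is_lim_right0 h 0) (Hhc : continuous_on_0 d0 h)
  (Hrel : forall e, 0 < e -> exists d, 0 < d /\ forall k, 0 < k < d ->
     Cmod (RtoC k * X - RtoC (/ 2) * A * h k * h k)%C <= e * Cmod (h k) ^ 2 + Cc * k * Cmod (h k)).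

Lemma quadratic_relation_sq_bound :
  exists M d, 0 <= M /\ 0 < d /\ forall k, 0 < k < d -> Cmod (h k) * Cmod (h k) <= M * k.
Proof.
  assert (HmA : 0 < Cmod A) by (apply Cmod_gt_0, HA).
  set (al := Cmod A / 4). assert (Hal : 0 < al) by (unfold al; lra).
  destruct (Hrel al Hal) as [da [Hda Da]].
  exists (4 * Cc * Cc / (al * al) + 2 * Cmod X / al), (Rmin da 1).
  split; [|split; [apply Rmin_glb_lt; lra|]].
  { pose proof (Cmod_ge_0 X).
    assert (0 <= 4 * Cc * Cc / (al * al)) by (apply Rmult_le_pos; [nra|left; apply Rinv_0_lt_compat; nra]).
    assert (0 <= 2 * Cmod X / al) by (apply Rmult_le_pos; [nra|left; apply Rinv_0_lt_compat; nra]).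
    lra. }
  intros k Hk. pose proof (Rmin_l da 1). pose proof (Rmin_r da 1).
  specialize (Da k ltac:(lra)). set (y := Cmod (h k)) in *.
  assert (Hy : 0 <= y) by apply Cmod_ge_0.
  assert (E1 : Cmod (RtoC (/ 2) * A * h k * h k)%C = 2 * al * (y * y)).
  { rewrite !Cmod_mult, Cmod_R, Rabs_right by lra. unfold al, y. field. }
  assert (E2 : Cmod (RtoC k * X)%C = k * Cmod X) by (rewrite Cmod_mult, Cmod_R, Rabs_right by lra; reflexivity).
  pose proof (Cmod_triangle (RtoC k * X)%C (- (RtoC k * X - RtoC (/ 2) * A * h k * h k))%C) as T.
  replace (RtoC k * X + - (RtoC k * X - RtoC (/ 2) * A * h k * h k))%C
    with (RtoC (/ 2) * A * h k * h k)%C in T by ring.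
  rewrite Cmod_opp, E1, E2 in T.
  apply sq_le_of_quadratic_ineq; [exact Hal|exact HCc|apply Cmod_ge_0|exact Hy|lra|].
  simpl in Da. nra.
Qed.

Lemma quadratic_relation_square_lim :
  is_lim_right0 (fun k => (RtoC (/ sqrt k) * h k) * (RtoC (/ sqrt k) * h k))%C (RtoC 2 * X / A)%C.
Proof.
  assert (HmA : 0 < Cmod A) by (apply Cmod_gt_0, HA).
  destruct quadratic_relation_sq_bound as [M [dM [HM [HdM Bnd]]]].
  intros e He.
  destruct (Hrel (e * Cmod A / (4 * (M + 1)))) as [db [Hdb Db]]; [apply Rdiv_lt_0_compat; nra|].
  destruct (Hh0 (e * Cmod A / (4 * (Cc + 1)))) as [dc [Hdc Dc]]; [apply Rdiv_lt_0_compat; nra|].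
  exists (Rmin dM (Rmin db dc)). split; [repeat apply Rmin_glb_lt; lra|].
  intros k Hk.
  pose proof (Rmin_l dM (Rmin db dc)). pose proof (Rmin_r dM (Rmin db dc)).
  pose proof (Rmin_l db dc). pose proof (Rmin_r db dc).
  specialize (Bnd k ltac:(lra)). specialize (Db k ltac:(lra)). specialize (Dc k ltac:(lra)).
  replace (h k - 0)%C with (h k) in Dc by ring.
  set (y := Cmod (h k)) in *. assert (Hy : 0 <= y) by apply Cmod_ge_0.
  rewrite (scaled_square_sub_eq (h k) X A k ltac:(lra) HA), !Cmod_mult, Cmod_opp, Cmod_div, !Cmod_R by exact HA.
  rewrite (Rabs_right (/ k)) by (left; apply Rinv_0_lt_compat; lra).
  rewrite (Rabs_right 2) by lra.
  set (Q := Cmod (RtoC k * X - RtoC (/ 2) * A * h k * h k)%C) in *.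
  assert (HQ : / k * Q <= e * Cmod A / (4 * (M + 1)) * M + Cc * y).
  { apply Rmult_le_reg_l with k; [lra|].
    replace (k * (/ k * Q)) with Q by (field; lra).
    assert (e * Cmod A / (4 * (M + 1)) * y ^ 2 <= e * Cmod A / (4 * (M + 1)) * (M * k))
      by (apply Rmult_le_compat_l; [left; apply Rdiv_lt_0_compat; nra|simpl; nra]).
    nra. }
  assert (HQ3 : e * Cmod A / (4 * (M + 1)) * M <= e * Cmod A / 4).
  { apply Rle_trans with (e * Cmod A / (4 * (M + 1)) * (M + 1));
      [apply Rmult_le_compat_l; [left; apply Rdiv_lt_0_compat; nra|lra]|].
    right. field. lra. }
  assert (HQ4 : Cc * y < e * Cmod A / 4).
  { apply Rle_lt_trans with (Cc * (e * Cmod A / (4 * (Cc + 1)))); [apply Rmult_le_compat_l; lra|].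
    apply Rlt_le_trans with ((Cc + 1) * (e * Cmod A / (4 * (Cc + 1))));
      [apply Rmult_lt_compat_r; [apply Rdiv_lt_0_compat; nra|lra]|].
    right. field. lra. }
  replace (/ k * (2 / Cmod A) * Q) with (2 / Cmod A * (/ k * Q)) by ring.
  apply Rlt_le_trans with (2 / Cmod A * (e * Cmod A / 4 + e * Cmod A / 4)).
  - apply Rmult_lt_compat_l; [apply Rdiv_lt_0_compat; lra|lra].
  - right. field. lra.
Qed.

Lemma quadratic_relation_sqrt_lim :
  exists L, filterlim (fun k => RtoC (/ sqrt k) * h k)%C (at_right 0) (locally L)
         /\ X = (RtoC (/ 2) * A * L * L)%C.
Proof.
  destruct (is_lim_right0_sqrt _ _ d0 Hd0 (continuous_on_0_div_sqrt h d0 Hhc) quadratic_relation_square_lim)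
    as [L [HL HLL]].
  exists L. split; [exact (filterlim_of_is_lim_right0 _ _ HL)|].
  replace (RtoC (/ 2) * A * L * L)%C with (RtoC (/ 2) * A * (L * L))%C by ring.
  rewrite HLL, (RtoC_inv 2) by lra. field. exact HA.
Qed.

End QuadraticRelation.

(* The quadratic part of [F] gives the relation of [quadratic_relation_sqrt_lim]; the Lipschitz
   bound on [G] makes the [k tau] term of size [O(k |h|)]. *)
Lemma hodograph_sqrt_lim (F G w : C -> C) (z0 A X : C) (h : R -> C) (tau d0 : R) :
  A <> 0%C -> 0 < d0 -> (forall u, Cmod (w u) = Cmod u) ->
  (forall u v, (w u - w v)%C = w (u - v)%C) ->
  second_order_approx F z0 (fun u => RtoC (/ 2) * A * w u * w u)%C -> lipschitz_at G z0 ->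
  (forall k, 0 < k < d0 ->
     (RtoC k * X)%C = (F (z0 + h k) - F z0 - RtoC (k * tau) * (G (z0 + h k) - G z0))%C) ->
  is_lim_right0 h 0 -> continuous_on_0 d0 h ->
  exists L, filterlim (fun k => RtoC (/ sqrt k) * w (h k))%C (at_right 0) (locally L)
         /\ X = (RtoC (/ 2) * A * L * L)%C.
Proof.
  intros HA Hd0 Hw Hwlin HF [K [dL [HK [HdL HG]]]] Hrel Hh0 Hhc.
  assert (Hw0 : w (RtoC 0) = RtoC 0) by (apply Cmod_eq_0; rewrite Hw; apply Cmod_0).
  apply (quadratic_relation_sqrt_lim (fun k => w (h k)) X A (Rabs tau * K) d0);
    [exact HA|pose proof (Rabs_pos tau); nra|exact Hd0| | |].
  - intros e He. destruct (Hh0 e He) as [d [Hd D]]. exists d. split; [exact Hd|].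
    intros k Hk. rewrite <- Hw0, Hwlin, Hw. apply D, Hk.
  - intros k Hk e He. destruct (Hhc k Hk e He) as [d [Hd D]]. exists d. split; [exact Hd|].
    intros k' Hk' Hkk. rewrite Hwlin, Hw. apply D; assumption.
  - intros e He. destruct (HF e He) as [dc [Hdc Dc]].
    destruct (Hh0 (Rmin dc dL)) as [d1 [Hd1 D1]]; [apply Rmin_glb_lt; lra|].
    exists (Rmin d1 d0). split; [apply Rmin_glb_lt; lra|].
    intros k Hk. pose proof (Rmin_l d1 d0). pose proof (Rmin_r d1 d0).
    specialize (D1 k ltac:(lra)). replace (h k - 0)%C with (h k) in D1 by ring.
    pose proof (Rmin_l dc dL). pose proof (Rmin_r dc dL).
    specialize (Dc (h k) ltac:(lra)). specialize (HG (h k) ltac:(lra)).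
    rewrite (Hrel k ltac:(lra)), Hw.
    replace (F (z0 + h k) - F z0 - RtoC (k * tau) * (G (z0 + h k) - G z0)
             - RtoC (/ 2) * A * w (h k) * w (h k))%C with
      ((F (z0 + h k) - F z0 - RtoC (/ 2) * A * w (h k) * w (h k))
       + - (RtoC (k * tau) * (G (z0 + h k) - G z0)))%C by ring.
    eapply Rle_trans; [apply Cmod_triangle|].
    rewrite Cmod_opp, Cmod_mult, Cmod_R, Rabs_mult, (Rabs_right k) by lra.
    apply Rplus_le_compat; [exact Dc|].
    pose proof (Rabs_pos tau).
    replace (Rabs tau * K * k * Cmod (h k)) with (k * Rabs tau * (K * Cmod (h k))) by ring.
    apply Rmult_le_compat_l; [nra|exact HG].
Qed.

Lemma continuous_on2_ray (Omega : R -> R -> Prop) (r : R -> R -> C) x0 t0 xi tau k1 :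
  continuous_on2 Omega r -> Omega (x0 + k1 * xi) (t0 + k1 * tau) ->
  forall e, 0 < e -> exists d, 0 < d /\ forall k, Omega (x0 + k * xi) (t0 + k * tau) ->
    Rabs (k - k1) < d -> Cmod (Cminus (r (x0 + k * xi) (t0 + k * tau)) (r (x0 + k1 * xi) (t0 + k1 * tau))) < e.
Proof.
  intros Hc HO1 e He. destruct (Hc _ _ HO1 e He) as [d [Hd D]].
  assert (Hscale : forall c, 0 < d / (Rabs c + 1) /\ forall k, Rabs (k - k1) < d / (Rabs c + 1) ->
            Rabs (k * c - k1 * c) < d).
  { intros c. pose proof (Rabs_pos c). split; [apply Rdiv_lt_0_compat; lra|].
    intros k Hk. replace (k * c - k1 * c) with ((k - k1) * c) by ring. rewrite Rabs_mult.
    apply Rle_lt_trans with (d / (Rabs c + 1) * Rabs c); [apply Rmult_le_compat_r; lra|].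
    apply Rlt_le_trans with (d / (Rabs c + 1) * (Rabs c + 1));
      [apply Rmult_lt_compat_l; [apply Rdiv_lt_0_compat|]; lra|].
    right; field; lra. }
  destruct (Hscale xi) as [Hx Sx]. destruct (Hscale tau) as [Ht St].
  exists (Rmin (d / (Rabs xi + 1)) (d / (Rabs tau + 1))). split; [apply Rmin_glb_lt; lra|].
  intros k HO Hk. pose proof (Rmin_l (d / (Rabs xi + 1)) (d / (Rabs tau + 1))).
  pose proof (Rmin_r (d / (Rabs xi + 1)) (d / (Rabs tau + 1))).
  apply D; [exact HO| |].
  - replace (x0 + k * xi - (x0 + k1 * xi)) with (k * xi - k1 * xi) by ring. apply Sx. lra.
  - replace (t0 + k * tau - (t0 + k1 * tau)) with (k * tau - k1 * tau) by ring. apply St. lra.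
Qed.

Lemma ray_increment (Omega : R -> R -> Prop) (r : R -> R -> C) x0 t0 xi tau d0 :
  continuous_on2 Omega r -> Omega x0 t0 -> 0 < d0 ->
  (forall k, 0 < k < d0 -> Omega (x0 + k * xi) (t0 + k * tau)) ->
  is_lim_right0 (fun k => Cminus (r (x0 + k * xi) (t0 + k * tau)) (r x0 t0)) 0 /\
  continuous_on_0 d0 (fun k => Cminus (r (x0 + k * xi) (t0 + k * tau)) (r x0 t0)).
Proof.
  intros Hcont HO0 Hd0 HO. split.
  - intros e He.
    destruct (continuous_on2_ray Omega r x0 t0 xi tau 0 Hcont) with (e := e) as [d [Hd D]];
      [rewrite !Rmult_0_l, !Rplus_0_r; exact HO0|exact He|].
    exists (Rmin d d0). split; [apply Rmin_glb_lt; lra|].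
    intros k Hk. pose proof (Rmin_l d d0). pose proof (Rmin_r d d0).
    specialize (D k (HO k ltac:(lra)) ltac:(rewrite Rminus_0_r, Rabs_pos_eq; lra)).
    rewrite !Rmult_0_l, !Rplus_0_r in D.
    assert (E : forall a : C, (a - 0)%C = a) by (intros; ring). rewrite E. exact D.
  - intros k Hk e He.
    destruct (continuous_on2_ray Omega r x0 t0 xi tau k Hcont (HO k Hk) e He) as [d [Hd D]].
    exists d. split; [exact Hd|]. intros k' Hk' Hkk.
    assert (E : forall a b c : C, (Cminus a c - Cminus b c)%C = Cminus a b) by (intros; ring).
    rewrite E. apply D; [apply HO, Hk'|exact Hkk].
Qed.

Lemma hodograph_increment (l mu : C -> C) (z0 z : C) (x0 t0 xi tau k : R) :
  (RtoC x0 + l z0 * RtoC t0)%C = mu z0 ->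
  (RtoC (x0 + k * xi) + l z * RtoC (t0 + k * tau))%C = mu z ->
  (RtoC k * (RtoC xi + l z0 * RtoC tau))%C
  = ((mu z - t0 * l z) - (mu z0 - t0 * l z0) - RtoC (k * tau) * (l z - l z0))%C.
Proof. intros H0 H. rewrite <- H0, <- H, !RtoC_plus, !RtoC_mult. ring. Qed.

Theorem mainTheorem5
  (lam mu_p mu_m : C -> C)
  (r : R -> R -> C)               (* r_+(x,t); r_-(x,t) = conj r_+(x,t) *)
  (Omega : R -> R -> Prop)
  (x0 t0 eps : R) :
  0 < eps ->
  smooth_on (Cball (r x0 t0) eps) lam ->
  smooth_on (Cball (r x0 t0) eps) mu_p ->
  smooth_on (Cball (r x0 t0) eps) mu_m ->
  (forall z, Cball (r x0 t0) eps z -> lam z <> lam_minus lam z) ->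
  (forall z, Cball (r x0 t0) eps z ->
     dm mu_p z = Cmult (Cdiv (Cminus (mu_p z) (mu_m z))
                             (Cminus (lam z) (lam_minus lam z))) (dm lam z) /\
     dp mu_m z = Cmult (Cdiv (Cminus (mu_p z) (mu_m z))
                             (Cminus (lam z) (lam_minus lam z)))
                       (dp (lam_minus lam) z)) ->
  Omega x0 t0 ->
  continuous_on2 Omega r ->
  (forall x t, Omega x t ->
     Cplus (RtoC x) (Cmult (lam (r x t)) (RtoC t)) = mu_p (r x t) /\
     Cplus (RtoC x) (Cmult (lam_minus lam (r x t)) (RtoC t)) = mu_m (r x t)) ->
  dp mu_p (r x0 t0) = Cmult (RtoC t0) (dp lam (r x0 t0)) ->
  dm mu_m (r x0 t0) = Cmult (RtoC t0) (dm (lam_minus lam) (r x0 t0)) ->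
  a_plus lam mu_p t0 (r x0 t0) <> RtoC 0 ->
  a_minus lam mu_m t0 (r x0 t0) <> RtoC 0 ->
  (* (x - x0, t - t0) = k (xi, tau) means (x_+, x_-) = k (X_+, X_-), X_+- = xi + lambda^0_+- tau *)
  forall xi tau : R,
    (exists d, 0 < d /\ forall k, 0 < k < d -> Omega (x0 + k * xi) (t0 + k * tau)) ->
    exists Rp Rm : C,
      filterlim (fun k => Cmult (RtoC (/ sqrt k))
                   (Cminus (r (x0 + k * xi) (t0 + k * tau)) (r x0 t0)))
                (at_right 0) (locally Rp) /\
      filterlim (fun k => Cmult (RtoC (/ sqrt k))
                   (Cminus (Cconj (r (x0 + k * xi) (t0 + k * tau)))
                           (Cconj (r x0 t0))))
                (at_right 0) (locally Rm) /\
      Cplus (RtoC xi) (Cmult (lam (r x0 t0)) (RtoC tau))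
        = Cmult (Cmult (RtoC (/ 2)) (a_plus lam mu_p t0 (r x0 t0))) (Cmult Rp Rp) /\
      Cplus (RtoC xi) (Cmult (lam_minus lam (r x0 t0)) (RtoC tau))
        = Cmult (Cmult (RtoC (/ 2)) (a_minus lam mu_m t0 (r x0 t0))) (Cmult Rm Rm).
Proof.
  intros Heps Hsl Hsp Hsm Hne Hpde HO0 Hcont Hhod Hbp Hbm Hap Ham xi tau [d0 [Hd0 HO]].
  set (z0 := r x0 t0) in *.
  pose proof (smooth_on_conj _ _ Hsl) as Hsg.
  destruct (Hhod x0 t0 HO0) as [E0p E0m]. fold z0 in E0p, E0m.
  assert (Hhod0 : (mu_p z0 - mu_m z0)%C = (t0 * (lam z0 - lam_minus lam z0))%C)
    by (rewrite <- E0p, <- E0m; ring).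
  destruct (breakup_approx lam (lam_minus lam) mu_p mu_m z0 eps t0 Heps Hsl Hsg Hsp Hsm Hne
    (fun z Hz => proj1 (Hpde z Hz)) (fun z Hz => proj2 (Hpde z Hz)) Hhod0 Hbp Hbm) as [Ap Am].
  destruct (ray_increment Omega r x0 t0 xi tau d0 Hcont HO0 Hd0 HO) as [Hh0 Hhc].
  set (h k := Cminus (r (x0 + k * xi) (t0 + k * tau)) z0).
  assert (Hray : forall k, (z0 + h k)%C = r (x0 + k * xi) (t0 + k * tau)) by (intros k; unfold h; ring).
  destruct (hodograph_sqrt_lim _ lam (fun u => u) z0 _ (xi + lam z0 * tau)%C h tau d0 Hap Hd0 (fun u => eq_refl)
              (fun u v => eq_refl) Ap (lipschitz_at_of_smooth lam z0 eps Heps Hsl))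
    as [Rp [HRp ERp]]; [|exact Hh0|exact Hhc|].
  { intros k Hk. rewrite Hray. exact (hodograph_increment _ _ _ _ _ _ _ _ _ E0p (proj1 (Hhod _ _ (HO k Hk)))). }
  destruct (hodograph_sqrt_lim _ (lam_minus lam) Cconj z0 _ (xi + lam_minus lam z0 * tau)%C h tau d0 Ham Hd0 Cmod_conj
              (fun u v => eq_sym (Cminus_conj u v)) Am (lipschitz_at_of_smooth _ z0 eps Heps Hsg))
    as [Rm [HRm ERm]]; [|exact Hh0|exact Hhc|].
  { intros k Hk. rewrite Hray. exact (hodograph_increment _ _ _ _ _ _ _ _ _ E0m (proj2 (Hhod _ _ (HO k Hk)))). }
  exists Rp, Rm. split; [exact HRp|split; [|split]].
  - eapply filterlim_ext; [|exact HRm]. intros k. unfold h. rewrite Cminus_conj. reflexivity.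
  - rewrite ERp. ring.
  - rewrite ERm. ring.
Qed.
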